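(* Let $q\in\mathbb C[z]$ with $q(0)=0$, let $n\in\mathbb N$ and $k>0$ with $\deg q<n$. For $c>0$ put $\delta(c)=(2kc)^{-1/n}$ and $q_c=k(cz^n-q)$. Then for every sufficiently large $c>0$, $q_c(\delta(c)\mathbb D)\subseteq\mathbb D$ and all zeros of $q_c$ belong to $\delta(c)\mathbb D$.
   Context: $\mathbb D=\{z\in\mathbb C:|z|<1\}$. *)

From mathcomp Require Import all_boot all_algebra.
From mathcomp Require Import reals exp.
From mathcomp Require Export complex.
Set Implicit Arguments. Unset Strict Implicit. Unset Printing Implicit Defensive.
Import GRing.Theory Num.Theory.
Local Open Scope ring_scope.

Definition delta (R : realType) (n : nat) (k c : R) : R :=
  powR (2 * k * c) (- (n%:R)^-1).

Definition qc (R : realType) (q : {poly R[i]}) (n : nat) (k c : R) : {poly R[i]} :=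
  (k%:C)%C *: ((c%:C)%C *: 'X^n - q).

From mathcomp Require Import all_boot all_order all_algebra.
From mathcomp Require Import reals exp complex.
From mathcomp Require Import ring lra.
Import Order.TTheory GRing.Theory Num.Theory Normc.
Local Open Scope ring_scope.
Local Open Scope complex_scope.

(* Bound |q(z)| by the majorant M(r) = sum_i |q_i| r^i at r = |z|.  Since q(0) = 0,
   M(r) <= M(1) r for r <= 1, and k c delta^n = 1/2, so on |z| < delta we get
   |q_c(z)| < 1/2 + k M(1) delta, which is at most 1 for large c because delta -> 0.
   For a zero z of q_c we have c |z|^n = |q(z)| <= M(|z|); as deg q <= n the map
   r |-> M(r)/r^n is nonincreasing, so |z| >= delta would force
   c delta^n <= M(delta) <= M(1) delta, i.e. 1 <= 2 k M(1) delta. *)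

Section RealNorm.
Context {R : rcfType}.
Implicit Types (z : R[i]) (p : {poly R[i]}) (r s : R).

Lemma normcE z : `|z| = (normc z)%:C.
Proof. by []. Qed.

Lemma normc_ge0 z : 0 <= normc z.
Proof. by rewrite -ler0c; exact: normr_ge0 z. Qed.

Lemma normc_real (x : R) : 0 <= x -> normc x%:C = x.
Proof. by move=> x0; apply: complexI; rewrite -[LHS]/`|x%:C| ger0_norm ?ler0c. Qed.

Lemma normcX z m : normc (z ^+ m) = normc z ^+ m.
Proof. by apply: complexI; rewrite rmorphXn -[LHS]/`|z ^+ m| normrX. Qed.

Lemma normc_sum I (r : seq I) (P : pred I) (F : I -> R[i]) :
  normc (\sum_(i <- r | P i) F i) <= \sum_(i <- r | P i) normc (F i).
Proof.
(* [Rcomplex R] is [R[i]] normed by the [R]-valued [normc]. *)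
exact: (@ler_norm_sum _ (Rcomplex R)).
Qed.

Definition majorant p r : R := \sum_(i < size p) normc p`_i * r ^+ i.

Lemma normc_horner_le p z : normc p.[z] <= majorant p (normc z).
Proof.
rewrite horner_coef; apply: le_trans; first exact: normc_sum.
by apply: ler_sum => i _; rewrite normcM normcX.
Qed.

Lemma majorant_ge0 p r : 0 <= r -> 0 <= majorant p r.
Proof.
by move=> r0; apply: sumr_ge0 => i _; rewrite mulr_ge0 ?normc_ge0 ?exprn_ge0.
Qed.

Lemma majorant_le_linear p r : p.[0] = 0 -> 0 <= r -> r <= 1 ->
  majorant p r <= majorant p 1 * r.
Proof.
move=> p0 r0 r1; rewrite mulr_suml; apply: ler_sum => -[[|j] _] _ /=.
  by rewrite -horner_coef0 p0 normc0 !mul0r.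
rewrite expr1n mulr1 exprSr mulrA ler_wpM2r //.
by rewrite ler_piMr ?normc_ge0 ?exprn_ile1.
Qed.

Lemma majorant_homogeneous p n r s : (size p <= n.+1)%N -> 0 <= r -> r <= s ->
  majorant p s * r ^+ n <= s ^+ n * majorant p r.
Proof.
move=> sp r0 rs; rewrite mulr_suml mulr_sumr; apply: ler_sum => -[i /= ip] _.
have s0 : 0 <= s by exact: le_trans rs.
have := leq_trans ip sp; rewrite ltnS => /subnKC <-; rewrite !exprD.
set t := normc p`_i * s ^+ i * r ^+ i.
have t0 : 0 <= t by rewrite !mulr_ge0 ?normc_ge0 ?exprn_ge0.
have -> : normc p`_i * s ^+ i * (r ^+ i * r ^+ (n - i)) = t * r ^+ (n - i).
  by rewrite /t; ring.
have -> : s ^+ i * s ^+ (n - i) * (normc p`_i * r ^+ i) = t * s ^+ (n - i).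
  by rewrite /t; ring.
by rewrite ler_wpM2l // lerXn2r ?nnegrE.
Qed.

End RealNorm.

Section Delta.
Context {R : realType} {n : nat} {k c : R}.
Hypotheses (n_gt0 : (0 < n)%N) (k_gt0 : 0 < k) (c_gt0 : 0 < c).

Let kc_gt0 : 0 < 2 * k * c. Proof. by rewrite !mulr_gt0. Qed.

Lemma delta_gt0 : 0 < delta n k c.
Proof. exact: powR_gt0. Qed.

Lemma delta_expn : 2 * k * c * delta n k c ^+ n = 1.
Proof.
rewrite /delta -powR_mulrn; last exact: powR_ge0.
rewrite -powRrM mulNr mulVf ?pnatr_eq0 -?lt0n //.
have := @powR_invn R (2 * k * c) 1 (ltW kc_gt0).
by rewrite expr1 => h; rewrite (_ : -1 = 1 *- 1) ?h ?mulfV ?gt_eqF.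
Qed.

Lemma delta_lt e : 0 < e -> (2 * k * e ^+ n)^-1 < c -> delta n k c < e.
Proof.
move=> e_gt0; rewrite -div1r ltr_pdivrMr ?mulr_gt0 ?exprn_gt0 // => ce.
rewrite ltNge; apply/negP => /(lerXn2r n) ed.
have {}ed : e ^+ n <= delta n k c ^+ n by rewrite ed ?nnegrE ?ltW ?delta_gt0.
have := ler_wpM2l (ltW kc_gt0) ed; rewrite delta_expn; nra.
Qed.

End Delta.

Section ScaledPolynomial.
Context {R : realType}.
Variables (q : {poly R[i]}) (n : nat) (k c : R).

Lemma horner_qc z : (qc q n k c).[z] = k%:C * (c%:C * z ^+ n - q.[z]).
Proof. by rewrite /qc hornerZ hornerD hornerN hornerZ hornerXn. Qed.

Lemma normc_qc_le z : 0 <= k -> 0 <= c ->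
  normc (qc q n k c).[z] <= k * (c * normc z ^+ n + majorant q (normc z)).
Proof.
move=> k0 c0; rewrite horner_qc normcM normc_real // ler_wpM2l //.
apply: le_trans (le_normcD _ _) _; rewrite normcN normcM normcX normc_real //.
by rewrite lerD2l normc_horner_le.
Qed.

Lemma root_qc_le z : k != 0 -> 0 <= c -> root (qc q n k c) z ->
  c * normc z ^+ n <= majorant q (normc z).
Proof.
move=> k0 c0; rewrite rootE horner_qc mulf_eq0 fmorph_eq0 (negPf k0) subr_eq0.
by move=> /eqP qz; rewrite -(normc_real _ c0) -normcX -normcM qz normc_horner_le.
Qed.

End ScaledPolynomial.

Section SmallDelta.
Context {R : realType}.
Variables (q : {poly R[i]}) (n : nat) (k c : R).
Hypotheses (q0 : q.[0] = 0) (size_q : (size q <= n)%N).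
Hypotheses (n_gt0 : (0 < n)%N) (k_gt0 : 0 < k) (c_gt0 : 0 < c).
Let d := delta n k c.
Hypotheses (d_le1 : d <= 1) (d_small : 2 * k * majorant q 1 * d < 1).

Let d_gt0 : 0 < d. Proof. exact: delta_gt0. Qed.
Let d_expn : 2 * k * c * d ^+ n = 1. Proof. exact: delta_expn. Qed.
Let A_ge0 : 0 <= majorant q 1. Proof. exact: majorant_ge0. Qed.

Lemma normc_qc_lt1 z : normc z < d -> normc (qc q n k c).[z] < 1.
Proof.
set s := normc z => sd; have s0 : 0 <= s := normc_ge0 z.
have Ms : majorant q s <= majorant q 1 * s.
  by rewrite majorant_le_linear // (le_trans (ltW sd)).
have cs : c * s ^+ n < c * d ^+ n by rewrite ltr_pM2l // ltrXn2r // -lt0n.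
have As : majorant q 1 * s <= majorant q 1 * d by rewrite ler_wpM2l // ltW.
have lt_bound : c * s ^+ n + majorant q s < c * d ^+ n + majorant q 1 * d by lra.
apply: le_lt_trans (normc_qc_le q n k c z (ltW k_gt0) (ltW c_gt0)) _.
apply: lt_trans (_ : _ < k * (c * d ^+ n + majorant q 1 * d)) _.
  by rewrite ltr_pM2l.
have -> : k * (c * d ^+ n + majorant q 1 * d) =
  (2 * k * c * d ^+ n + 2 * k * majorant q 1 * d) / 2 by field.
by rewrite d_expn; move: d_small; set x := 2 * k * _ * d; lra.
Qed.

Lemma root_qc_normc_lt z : root (qc q n k c) z -> normc z < d.
Proof.
move=> qz; rewrite ltNge; apply/negP; set s := normc z => ds.
have s_gt0 : 0 < s := lt_le_trans d_gt0 ds.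
have cs := root_qc_le q n k c z (lt0r_neq0 k_gt0) (ltW c_gt0) qz; rewrite -/s in cs.
have hom := majorant_homogeneous q n d s (leqW size_q) (ltW d_gt0) ds.
have cdM : c * d ^+ n <= majorant q d.
  rewrite -(ler_pM2l (exprn_gt0 n s_gt0)); apply: le_trans hom.
  by rewrite mulrA [s ^+ n * c]mulrC ler_wpM2r // exprn_ge0 // ltW.
have Md := majorant_le_linear q d q0 (ltW d_gt0) d_le1.
have : 2 * k * (c * d ^+ n) <= 2 * k * (majorant q 1 * d).
  by rewrite ler_wpM2l ?(le_trans cdM Md) // mulr_ge0 // ltW.
by rewrite !mulrA d_expn; move: d_small; set x := 2 * k * _ * d; lra.
Qed.

End SmallDelta.

Theorem lemma3p5 (R : realType) (q : {poly R[i]}) (n : nat) (k : R) :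
  q.[0] = 0 -> 0 < k -> (0 < n)%N -> (size q <= n)%N ->
  exists c0 : R, forall c : R, c0 < c ->
    (forall z : R[i], `|z| < ((delta n k c)%:C)%C -> `|(qc q n k c).[z]| < 1) /\
    (forall z : R[i], root (qc q n k c) z -> `|z| < ((delta n k c)%:C)%C).
Proof.
move=> q0 k_gt0 n_gt0 size_q.
set A := majorant q 1.
have A_ge0 : 0 <= A by exact: majorant_ge0.
have kA1_gt0 : 0 < 2 * k * A + 1.
  by apply: ltr_wpDl; [rewrite !mulr_ge0 // ltW | exact: ltr01].
set e := (2 * k * A + 1)^-1.
have e_gt0 : 0 < e by rewrite invr_gt0.
exists (2 * k * e ^+ n)^-1 => c ce.
have c_gt0 : 0 < c by apply: lt_trans ce; rewrite invr_gt0 !mulr_gt0 ?exprn_gt0.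
have := delta_lt n_gt0 k_gt0 c_gt0 e e_gt0 ce.
rewrite /e -div1r ltr_pdivlMr // => de.
have d_gt0 : 0 < delta n k c := delta_gt0 k_gt0 c_gt0.
have d_le1 : delta n k c <= 1 by nra.
have d_small : 2 * k * A * delta n k c < 1 by nra.
split => z; rewrite normcE ltcR.
- by move=> zd; rewrite normcE -[X in _ < X]/(1%:C) ltcR normc_qc_lt1.
- exact: root_qc_normc_lt.
Qed.
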